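(* Let $M=(E,\mathcal{I})$ be a matroid and consider the matroid game with a diagonal loss matrix $L$ with $L_{e,e}>0$ for all $e\in E$. If this game has a symmetric Nash equilibrium $(x,x)$, then $x$ is the unique lexicographically optimal point of $B(M)$ with respect to the weight vector $w(e)=1/L_{e,e}$ ($e\in E$).
   Context: $B(M)=\{x\ge0: x(S)\le r(S)\ \forall S\subseteq E,\ x(E)=r(E)\}$ with $r$ the rank function. In the matroid game, the row player chooses $x\in B(M)$ minimizing $x^TLy$ and the column player chooses $y\in B(M)$ maximizing it; $(x,x)$ is a symmetric Nash equilibrium if $x^TLz\le x^TLx\le z^TLx$ for all $z\in B(M)$. For a positive weight vector $w$, $x\in B(M)$ is lexicographically optimal if the $|E|$-tuple $(x(e)/w(e))_{e\in E}$ sorted in increasing order is lexicographically maximum among all such sorted tuples $(y(e)/w(e))_{e\in E}$ for $y\in B(M)$. *)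

From HB Require Import structures.
From mathcomp Require Import all_boot all_order all_algebra.
Set Implicit Arguments. Unset Strict Implicit. Unset Printing Implicit Defensive.
Import Order.TTheory GRing.Theory Num.Theory.
Local Open Scope ring_scope.

Definition is_matroid (E : finType) (indep : {set {set E}}) : Prop :=
  [/\ set0 \in indep,
      (forall I J : {set E}, J \in indep -> I \subset J -> I \in indep) &
      (forall I J : {set E}, I \in indep -> J \in indep -> #|I| < #|J| ->
         exists2 e, e \in J :\: I & e |: I \in indep)]%N.

Definition mrank (E : finType) (indep : {set {set E}}) (S : {set E}) : nat :=
  \max_(I in indep | I \subset S) #|I|.

Definition in_base_polytope (R : realFieldType) (E : finType)
    (indep : {set {set E}}) (x : E -> R) : Prop :=
  [/\ forall e, 0 <= x e,
      forall S : {set E}, \sum_(e in S) x e <= (mrank indep S)%:R &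
      \sum_(e in [set: E]) x e = (mrank indep [set: E])%:R].

Definition bilin (R : realFieldType) (E : finType) (L : E -> E -> R)
    (x y : E -> R) : R :=
  \sum_(e : E) \sum_(f : E) x e * L e f * y f.

(* (x,x) is a symmetric Nash equilibrium of the matroid game with loss L
   (row player minimizes x^T L y, column player maximizes it). *)
Definition sym_nash (R : realFieldType) (E : finType) (indep : {set {set E}})
    (L : E -> E -> R) (x : E -> R) : Prop :=
  in_base_polytope indep x /\
  forall z, in_base_polytope indep z ->
    bilin L x z <= bilin L x x /\ bilin L x x <= bilin L z x.

Fixpoint lex_le (R : realFieldType) (s t : seq R) : bool :=
  match s, t with
  | [::], _ => true
  | _ :: _, [::] => false
  | a :: s', b :: t' => (a < b) || ((a == b) && lex_le s' t')
  end.

Definition sorted_ratios (R : realFieldType) (E : finType) (w x : E -> R)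
    : seq R :=
  sort <=%R [seq x e / w e | e <- enum E].

Definition lex_optimal (R : realFieldType) (E : finType)
    (indep : {set {set E}}) (w x : E -> R) : Prop :=
  in_base_polytope indep x /\
  forall y, in_base_polytope indep y ->
    lex_le (sorted_ratios w y) (sorted_ratios w x).

From HB Require Import structures.
From mathcomp Require Import all_boot all_order all_algebra.
From Stdlib Require Import FunctionalExtensionality.
Set Implicit Arguments. Unset Strict Implicit. Unset Printing Implicit Defensive.
Import Order.TTheory GRing.Theory Num.Theory.
Local Open Scope ring_scope.

(* Write c(e) = x(e) L_ee, the ratio x(e)/w(e).  For diagonal L the Nash
   inequalities say that the linear form z |-> sum_e c(e) z(e) is constant on
   B(M).  Comparing x with the indicator of the greedy base for decreasing c,
   an Abel summation shows that x is tight, x(U_t) = r(U_t), on every upper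
   level set U_t = {e | t < c(e)}, t >= 0; a second Abel summation then gives
   y(U_t) = x(U_t) for every y in B(M).  If y <> x, let v be the least value
   c(e) at which y(e) <> x(e): y agrees with x below level v and has the same
   total on level v, so some ratio y(e)/w(e) on level v falls below v.  Hence
   the sorted ratios of y have the same entries as those of x below v, plus
   one more, and are lexicographically smaller. *)

Definition lex_lt (R : realFieldType) (s t : seq R) : bool :=
  lex_le s t && ~~ lex_le t s.

Lemma lex_le_refl (R : realFieldType) (s : seq R) : lex_le s s.
Proof. by elim: s => //= a s ->; rewrite eqxx ltxx. Qed.

Lemma lex_lt_sorted_count (R : realFieldType) (v : R) (s t : seq R) :
  sorted <=%R s -> sorted <=%R t -> size s = size t ->
  (forall u, u < v -> (count (pred1 u) t <= count (pred1 u) s)%N) ->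
  (count (< v) t < count (< v) s)%N ->
  lex_lt s t.
Proof.
rewrite /lex_lt; elim: s t => [|a s IH] [|b t] // s_sorted t_sorted [size_st] count_le count_lt.
have a_min : all (>= a) s := order_path_min le_trans s_sorted.
case: (ltgtP a b) => [ab|ba|ab]; last subst b.
- by rewrite /= ab (lt_gtF ab) (gt_eqF ab).
- have above_b u : u \in a :: s -> b < u.
    by rewrite inE => /predU1P [-> // | /(allP a_min)]; apply: lt_le_trans.
  case: (ltP b v) => [bv|vb].
  + have no_b : count (pred1 b) (a :: s) = 0%N.
      by apply/count_memPn/negP => /above_b; rewrite ltxx.
    by have := count_le b bv; rewrite no_b /= eqxx.
  + have none_below : count (< v) (a :: s) = 0%N.
      by apply/eqP; rewrite -leqn0 leqNgt -has_count; apply/hasPn => u /above_b /= bu;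
        rewrite -leNgt (le_trans vb (ltW bu)).
    by rewrite none_below in count_lt.
- rewrite /= ltxx eqxx /=; apply: IH.
  + exact: path_sorted s_sorted.
  + exact: path_sorted t_sorted.
  + by [].
  + by move=> u /count_le; rewrite /= leq_add2l.
  + by move: count_lt; rewrite /= ltn_add2l.
Qed.

Lemma count_lt_subpred (T : Type) (P Q : pred T) (r : seq T) :
  subpred P Q -> has (predD Q P) r -> (count P r < count Q r)%N.
Proof.
move=> PQ; rewrite has_count => QnotP.
have <- : (count (predU P (predD Q P)) r + count (predI P (predD Q P)) r = count Q r)%N.
  rewrite (@eq_count _ (predI _ _) pred0) ?count_pred0 ?addn0; last first.
    by move=> e /=; case: (P e).
  by apply: eq_count => e /=; case: (boolP (P e)) => //= /PQ ->.
by rewrite count_predUI -addn1 leq_add2l.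
Qed.

Section AbelSummation.
Variables (R : realFieldType) (E : finType).

Lemma weighted_sum_split_min (A : {set E}) (c D : E -> R) (m : R) :
  {in A, forall e, m <= c e} ->
  \sum_(e in A) c e * D e =
    m * \sum_(e in A) D e + \sum_(e in [set e in A | m < c e]) (c e - m) * D e.
Proof.
move=> m_min.
have -> : \sum_(e in [set e in A | m < c e]) (c e - m) * D e =
          \sum_(e in A) (c e - m) * D e.
  rewrite [RHS](bigID (fun e => m < c e)) /= [X in _ + X]big1 ?addr0.
    by apply: eq_bigl => e; rewrite inE.
  move=> e /andP [eA]; rewrite -leNgt => ce_le_m.
  by rewrite [c e](@le_anti _ _ _ m) ?ce_le_m ?m_min // subrr mul0r.
by rewrite mulr_sumr -big_split; apply: eq_bigr => e _; rewrite /= -mulrDl subrKC.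
Qed.

(* Induction on #|A|: split off the least weight m (weighted_sum_split_min); the
   first term is m times the upper sum at any level below m, the second is handled
   by induction on A' = {e in A | m < c e}, whose upper sums are those of A above m. *)
Lemma abel_upper_sums (A : {set E}) (c D : E -> R) :
  {in A, forall e, 0 <= c e} ->
  (forall t, 0 <= t -> 0 <= \sum_(e in A | t < c e) D e) ->
  0 <= \sum_(e in A) c e * D e /\
  (\sum_(e in A) c e * D e = 0 ->
     forall t, 0 <= t -> \sum_(e in A | t < c e) D e = 0).
Proof.
move: {2}#|A| (leqnn #|A|) => n; elim: n A c => [|n IH] A c cardA c_ge0 D_ge0;
  have [-> | [e0 e0A]] := set_0Vmem A.
- by rewrite big_set0; split=> // _ t _; rewrite big_pred0 // => e; rewrite inE.
- by move: cardA; rewrite leqn0 cards_eq0 => /eqP A0; rewrite A0 inE in e0A.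
- by rewrite big_set0; split=> // _ t _; rewrite big_pred0 // => e; rewrite inE.
case: (arg_minP c e0A) => e1 e1A c_min; set m := c e1.
have m_ge0 : 0 <= m := c_ge0 e1 e1A.
set A' := [set e in A | m < c e].
have cardA' : (#|A'| <= n)%N.
  have : A' \proper A.
    apply/properP; split; first by apply/subsetP => e; rewrite inE => /andP [].
    by exists e1 => //; rewrite inE ltxx andbF.
  by move/proper_card => ltA; rewrite -ltnS (leq_trans ltA cardA).
have upper_shift t : 0 <= t ->
    \sum_(e in A' | t < c e - m) D e = \sum_(e in A | m + t < c e) D e.
  move=> t_ge0; apply: eq_bigl => e; rewrite inE ltrBrDl -andbA.
  case: (e \in A) => //=; apply/andb_idl => mt_lt.
  by apply: le_lt_trans mt_lt; rewrite lerDl.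
have [IH_ge0 IH_eq0] := IH A' (fun e => c e - m) cardA'
  (fun e => ltac:(by rewrite inE subr_ge0 => /andP [_ /ltW]))
  (fun t t_ge0 => ltac:(by rewrite upper_shift // D_ge0 // addr_ge0)).
have sum_below_m t : t < m -> \sum_(e in A | t < c e) D e = \sum_(e in A) D e.
  by move=> tm; apply: eq_bigl => e; case eA: (e \in A) => //=; apply: lt_le_trans (c_min e eA).
have mS_ge0 : 0 <= m * \sum_(e in A) D e.
  have [<- | m_gt0] := eqVneq 0 m; first by rewrite mul0r.
  by rewrite mulr_ge0 // -(sum_below_m 0) ?D_ge0 // lt_def eq_sym m_gt0.
rewrite (weighted_sum_split_min D c_min); split; first by rewrite addr_ge0.
move/eqP; rewrite paddr_eq0 // => /andP [/eqP mS0 /eqP T0] t t_ge0.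
case: (ltP t m) => [tm | mt].
  have m_gt0 : 0 < m := le_lt_trans t_ge0 tm.
  by move/eqP: mS0; rewrite mulf_eq0 (gt_eqF m_gt0) sum_below_m // => /eqP.
by rewrite -(subrKC m t) -upper_shift ?subr_ge0 // IH_eq0 // subr_ge0.
Qed.

Definition upper_level (c : E -> R) (t : R) : {set E} := [set e | t < c e].

Lemma upper_sums_eq_of_weighted_sums_eq (c a b : E -> R) :
  (forall e, 0 <= c e) ->
  (forall t, 0 <= t ->
     \sum_(e in upper_level c t) a e <= \sum_(e in upper_level c t) b e) ->
  \sum_e c e * a e = \sum_e c e * b e ->
  forall t, 0 <= t ->
    \sum_(e in upper_level c t) a e = \sum_(e in upper_level c t) b e.
Proof.
move=> c_ge0 a_le_b weighted_eq.
have upper_setT (F : E -> R) t :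
    \sum_(e in [set: E] | t < c e) F e = \sum_(e in upper_level c t) F e.
  by apply: eq_bigl => e; rewrite !inE.
have [_ ] := @abel_upper_sums [set: E] c (fun e => b e - a e) (fun e _ => c_ge0 e)
  (fun t t_ge0 => ltac:(by rewrite upper_setT sumrB subr_ge0 a_le_b)).
move=> sum_eq0 t t_ge0; apply/eqP; rewrite eq_sym -subr_eq0 -sumrB -upper_setT.
rewrite sum_eq0 //; under eq_bigl do rewrite inE.
by under eq_bigr do rewrite mulrBr; rewrite sumrB weighted_eq subrr.
Qed.

Lemma sum_split_level (c F : E -> R) (v : R) :
  \sum_e F e = \sum_(e | c e < v) F e + \sum_(e | c e == v) F e
               + \sum_(e in upper_level c v) F e.
Proof.
rewrite (bigID (fun e => c e < v)) /= -addrA; congr (_ + _).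
rewrite (bigID (fun e => c e == v)) /=; congr (_ + _); apply: eq_bigl => e;
  by rewrite ?inE; case: (ltgtP (c e) v).
Qed.

End AbelSummation.

Section Greedy.
Variables (R : realFieldType) (E : finType) (indep : {set {set E}}).
Hypothesis indep_matroid : is_matroid indep.

Lemma leq_card_mrank (I S : {set E}) :
  I \in indep -> I \subset S -> (#|I| <= mrank indep S)%N.
Proof.
by move=> I_indep IS; apply: (leq_bigmax_cond (P := fun I => (I \in indep) && (I \subset S)));
  rewrite I_indep.
Qed.

Lemma sum_indicator (J S : {set E}) :
  \sum_(e in S) ((e \in J)%:R : R) = #|J :&: S|%:R.
Proof.
rewrite -sum1_card natr_sum big_mkcond [RHS]big_mkcond /=.
by apply: eq_bigr => e _; rewrite inE andbC; case: (e \in S); case: (e \in J).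
Qed.

Lemma indicator_in_base_polytope (J : {set E}) :
  J \in indep -> #|J| = mrank indep [set: E] ->
  in_base_polytope indep (fun e => (e \in J)%:R : R).
Proof.
have [_ indep_sub _] := indep_matroid.
move=> J_indep card_J; split=> [e | S |]; rewrite ?ler0n // sum_indicator.
  by rewrite ler_nat leq_card_mrank ?subsetIr // (indep_sub _ _ J_indep) ?subsetIl.
by rewrite setIT card_J.
Qed.

Fixpoint greedy (s : seq E) (J : {set E}) : {set E} :=
  if s is e :: s' then greedy s' (if e |: J \in indep then e |: J else J) else J.

Variable c : E -> R.

Lemma greedy_spec (s : seq E) (J : {set E}) :
  J \in indep -> sorted (fun a b => c b <= c a) s ->
  (forall f e, f \in J -> e \in s -> c e <= c f) ->
  [/\ greedy s J \in indep, J \subset greedy s J &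
   forall e, e \in s -> e \notin greedy s J ->
     e |: (greedy s J :&: [set f | c e <= c f]) \notin indep].
Proof.
have [_ indep_sub _] := indep_matroid.
elim: s J => [|e s IH] J J_indep /= s_sorted J_above; first by split.
set J1 := if e |: J \in indep then e |: J else J.
have J1_indep : J1 \in indep by rewrite /J1; case: ifP.
have s_below_e : all (fun b => c b <= c e) s.
  by apply: order_path_min s_sorted => y x z h1 h2; apply: le_trans h2 h1.
have J_sub_J1 : J \subset J1 by rewrite /J1; case: ifP => // _; apply: subsetUr.
have J1_above f e' : f \in J1 -> e' \in s -> c e' <= c f.
  move=> f_J1 e'_s; have : f \in e |: J.
    by move: f_J1; rewrite /J1; case: ifP => // _ fJ; rewrite in_setU1 fJ orbT.
  rewrite in_setU1 => /predU1P [-> | fJ]; first exact: (allP s_below_e).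
  by apply: J_above; rewrite // inE e'_s orbT.
have [G_indep J1_sub_G G_max] := IH J1 J1_indep (path_sorted s_sorted) J1_above.
split=> //; first exact: subset_trans J_sub_J1 J1_sub_G.
move=> f; rewrite inE => /predU1P [-> | /G_max //] e_notin_G; apply/negP => e_aug_indep.
have e_notin_J1 : e \notin J1 by apply: contra e_notin_G; apply: (subsetP J1_sub_G).
have /negP : e |: J \notin indep.
  by move: e_notin_J1; rewrite /J1; case: ifP => // _; rewrite setU11.
apply; apply: (indep_sub _ _ e_aug_indep); apply: setUS; apply/subsetP => g gJ.
rewrite inE (subsetP (subset_trans J_sub_J1 J1_sub_G) g gJ) inE /=.
by apply: J_above; rewrite // inE eqxx.
Qed.

Definition greedy_base : {set E} :=
  greedy (sort (fun a b => c b <= c a) (enum E)) set0.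

Lemma greedy_base_spec :
  greedy_base \in indep /\
  (forall e, e \notin greedy_base ->
     e |: (greedy_base :&: [set f | c e <= c f]) \notin indep).
Proof.
have [indep0 _ _] := indep_matroid.
have [G_indep _ G_max] := greedy_spec indep0
  (sort_sorted (fun a b => le_total (c b) (c a)) (enum E))
  (fun f e => ltac:(by rewrite inE)).
by split=> // e; apply: G_max; rewrite mem_sort mem_enum.
Qed.

Lemma greedy_base_indep : greedy_base \in indep.
Proof. by case: greedy_base_spec. Qed.

Lemma card_greedy_base_upper (U : {set E}) :
  (forall e f, e \in U -> c e <= c f -> f \in U) ->
  #|greedy_base :&: U| = mrank indep U.
Proof.
move=> U_upper; have [_ indep_sub indep_aug] := indep_matroid.
have [G_indep G_max] := greedy_base_spec.
have GU_indep : greedy_base :&: U \in indep by apply: (indep_sub _ _ G_indep); apply: subsetIl.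
apply/eqP; rewrite eqn_leq leq_card_mrank ?subsetIr //=.
apply/bigmax_leqP => I /andP [I_indep IU]; rewrite leqNgt; apply/negP => lt_I.
have [e /setDP [eI e_notin_GU] e_aug] := indep_aug _ _ GU_indep I_indep lt_I.
have e_notin_G : e \notin greedy_base by rewrite inE (subsetP IU e eI) andbT in e_notin_GU.
move/negP: (G_max e e_notin_G); apply; apply: (indep_sub _ _ e_aug); apply/setUS/setIS.
by apply/subsetP => f; rewrite inE; apply: U_upper (subsetP IU e eI).
Qed.

End Greedy.

Lemma bilin_diag (R : realFieldType) (E : finType) (L : E -> E -> R) (u v : E -> R) :
  (forall e f, e != f -> L e f = 0) ->
  bilin L u v = \sum_e u e * L e e * v e.
Proof.
move=> L_diag; apply: eq_bigr => e _; rewrite (bigD1 e) //= big1 ?addr0 // => f fe.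
by rewrite L_diag ?mulr0 ?mul0r // eq_sym.
Qed.

Lemma sorted_ratios_invE (R : realFieldType) (E : finType) (d y : E -> R) :
  sorted_ratios (fun e => (d e)^-1) y = sort <=%R [seq y e * d e | e <- enum E].
Proof. by congr sort; apply: eq_map => e; rewrite invrK. Qed.

Section DiagonalMatroidGame.
Variables (R : realFieldType) (E : finType) (indep : {set {set E}}).
Variables (L : E -> E -> R) (x : E -> R).
Hypotheses (indep_matroid : is_matroid indep)
  (L_diag : forall e f, e != f -> L e f = 0) (L_pos : forall e, 0 < L e e)
  (x_nash : sym_nash indep L x).

Let c e := x e * L e e.

Let c_ge0 e : 0 <= c e.
Proof. by apply: mulr_ge0; [case: x_nash => -[] | apply: ltW]. Qed.

Lemma base_weighted_sum z :
  in_base_polytope indep z -> \sum_e c e * z e = \sum_e c e * x e.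
Proof.
move=> z_base; have [le_xz le_zx] := x_nash.2 z z_base.
have zx_xz : \sum_e z e * L e e * x e = \sum_e x e * L e e * z e.
  by apply: eq_bigr => e _; rewrite mulrC [z e * _]mulrC mulrA.
rewrite !bilin_diag // zx_xz in le_xz le_zx.
by apply/le_anti; rewrite le_xz le_zx.
Qed.

Lemma upper_level_tight t : 0 <= t ->
  \sum_(e in upper_level c t) x e = (mrank indep (upper_level c t))%:R.
Proof.
have [[_ x_sub_rank _] _] := x_nash.
have upper s e f : e \in upper_level c s -> c e <= c f -> f \in upper_level c s.
  by rewrite !inE => /lt_le_trans; apply.
have card_G s : #|greedy_base indep c :&: upper_level c s| = mrank indep (upper_level c s).
  exact: (card_greedy_base_upper indep_matroid (upper s)).
have G_base : in_base_polytope indep (fun e => (e \in greedy_base indep c)%:R : R).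
  apply: (indicator_in_base_polytope _ indep_matroid).
    exact: (greedy_base_indep indep_matroid c).
  by rewrite -(setIT (greedy_base indep c)) (card_greedy_base_upper indep_matroid).
move=> t_ge0; rewrite -card_G -sum_indicator //.
apply: upper_sums_eq_of_weighted_sums_eq => // [s s_ge0|].
  by rewrite sum_indicator // card_G x_sub_rank.
by rewrite base_weighted_sum.
Qed.

Lemma base_upper_level_sums y t :
  in_base_polytope indep y -> 0 <= t ->
  \sum_(e in upper_level c t) y e = \sum_(e in upper_level c t) x e.
Proof.
move=> y_base; apply: upper_sums_eq_of_weighted_sums_eq => // [s s_ge0|].
  by case: y_base => _ y_sub_rank _; rewrite upper_level_tight.
exact: base_weighted_sum.
Qed.

Lemma base_lex_lt y e0 :
  in_base_polytope indep y -> y e0 != x e0 ->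
  lex_lt (sorted_ratios (fun e => (L e e)^-1) y)
         (sorted_ratios (fun e => (L e e)^-1) x).
Proof.
move=> y_base y_ne_x; rewrite !sorted_ratios_invE.
case: (arg_minP c (P := fun e => y e != x e) y_ne_x) => e1 /= e1_ne c_min.
set v := c e1.
have agree_below e : c e < v -> y e = x e.
  by move=> ce_lt; apply/eqP; apply: contraTT ce_lt => /c_min; rewrite -leNgt.
have level_sum : \sum_(e | c e == v) (y e - x e) = 0.
  have [_ _ y_total] := y_base; have [[_ _ x_total] _] := x_nash.
  have sum_setT (F : E -> R) : \sum_(e in [set: E]) F e = \sum_e F e.
    by apply: eq_bigl => e; rewrite inE.
  have : \sum_e (y e - x e) = 0 by rewrite sumrB -!sum_setT y_total x_total subrr.
  rewrite (sum_split_level c _ v) big1 => [|e /agree_below ->]; last by rewrite subrr.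
  by rewrite [X in _ + X]sumrB base_upper_level_sums ?c_ge0 // subrr add0r addr0.
have [e2 e2_level y_e2_lt] : exists2 e2, c e2 == v & y e2 * L e2 e2 < v.
  case: (boolP [exists e, (c e == v) && (y e * L e e < v)]).
    by move=> /existsP [e /andP [? ?]]; exists e.
  rewrite negb_exists => /forallP not_below; exfalso.
  have level_ge0 e : c e == v -> 0 <= y e - x e.
    move=> ce_v; have := not_below e; rewrite ce_v /= -leNgt => v_le.
    by rewrite subr_ge0 -(ler_pM2r (L_pos e)) -[x e * _]/(c e) (eqP ce_v).
  have /eqP := psumr_eq0P level_ge0 level_sum (i := e1) (eqxx _).
  by rewrite subr_eq0 (negbTE e1_ne).
apply: (lex_lt_sorted_count (v := v)).
- exact: sort_sorted le_total _.
- exact: sort_sorted le_total _.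
- by rewrite !size_sort !size_map.
- move=> u u_lt; rewrite !count_sort !count_map; apply: sub_count => e /= /eqP cu.
  by rewrite agree_below ?cu // -[c e]/(x e * L e e) cu.
- rewrite !count_sort !count_map; apply: count_lt_subpred.
    by move=> e /= ce_lt; rewrite agree_below.
  apply/hasP; exists e2; first by rewrite -enumT mem_enum.
  by rewrite /= y_e2_lt -[x e2 * _]/(c e2) (eqP e2_level) ltxx.
Qed.

Lemma base_eq_or_lex_lt y :
  in_base_polytope indep y ->
  y = x \/ lex_lt (sorted_ratios (fun e => (L e e)^-1) y)
                  (sorted_ratios (fun e => (L e e)^-1) x).
Proof.
move=> y_base; case: (boolP [forall e, y e == x e]) => [/forallP y_eq_x | ].
  by left; apply: functional_extensionality => e; apply/eqP.
by rewrite negb_forall => /existsP [e0 y_ne_x]; right; apply: base_lex_lt y_ne_x.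
Qed.

End DiagonalMatroidGame.

Theorem corollary14 (R : realFieldType) (E : finType) (indep : {set {set E}})
    (L : E -> E -> R) (x : E -> R) :
  is_matroid indep ->
  (forall e f, e != f -> L e f = 0) ->
  (forall e, 0 < L e e) ->
  sym_nash indep L x ->
  lex_optimal indep (fun e => (L e e)^-1) x /\
  (forall y, lex_optimal indep (fun e => (L e e)^-1) y -> y = x).
Proof.
move=> indep_matroid L_diag L_pos x_nash.
have base_cmp := base_eq_or_lex_lt indep_matroid L_diag L_pos x_nash.
split.
  split=> [|y /base_cmp [-> | /andP [] //]]; [exact: x_nash.1 | exact: lex_le_refl].
move=> y [/base_cmp [] // /andP [_ not_x_le_y] y_opt].
by move: (y_opt x x_nash.1); rewrite (negbTE not_x_le_y).
Qed.
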